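(* Let $\tau$ be a pure type and let $\rho$ be a valuation (assigning natural numbers to iteration variables). If $\varphi \in \mathcal{L}^+(\tau)$ (a positive formula with empty fixpoint context), then $[\![\varphi]\!]\rho$ is a Scott-open subset of $[\![\tau]\!]$. If $\varphi \in \mathcal{L}^-(\tau)$, then $[\![\varphi]\!]\rho$ is a compact-saturated subset of $[\![\tau]\!]$. In particular, if $\varphi \in \mathcal{L}^\pm(\tau)$, then $[\![\varphi]\!]\rho$ is a compact Scott-open subset of $[\![\tau]\!]$.
   Context: Pure types: closed types of $\tau ::= \mathbf{1} \mid \tau\times\tau \mid \tau\to\tau \mid \tau+\tau \mid \alpha \mid \mu\alpha.\tau$, interpreted as Scott domains: $[\![\mathbf{1}]\!]=\{\bot\le\top\}$; products componentwise with projections $\pi_1,\pi_2$; $[\![\tau\to\sigma]\!]$ = Scott-continuous functions with pointwise order; $[\![\tau_1+\tau_2]\!]$ = disjoint union with a new bottom, with injections $\mathrm{inj}_i$; $[\![\mu\alpha.\tau]\!]$ = canonical bilimit solution with inverse isomorphisms $\mathrm{fold}:[\![\tau[\mu\alpha.\tau/\alpha]]\!]\to[\![\mu\alpha.\tau]\!]$, $\mathrm{unfold}$. Topology: Scott topology; saturated = upward closed. Iteration terms: $t ::= i \mid 0 \mid t+1$ ($i$ iteration variables). Fixpoint contexts $\Theta = X_1:\sigma_1,\dots,X_n:\sigma_n$ (distinct fixpoint variables). For $s\in\{\pm,+,-\}$, the sets $\mathcal{L}^s(\Theta;\tau)$ are generated by: $\mathrm{True},\mathrm{False}\in\mathcal{L}^s(\Theta;\tau)$;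 closure under $\wedge,\vee$; $\langle()\rangle\in\mathcal{L}^s(\Theta;\mathbf{1})$; $\langle\pi_i\rangle\varphi\in\mathcal{L}^s(\Theta;\tau_1\times\tau_2)$ if $\varphi\in\mathcal{L}^s(\Theta;\tau_i)$; $\langle\mathrm{inj}_i\rangle\varphi\in\mathcal{L}^s(\Theta;\tau_1+\tau_2)$ if $\varphi\in\mathcal{L}^s(\Theta;\tau_i)$; $\langle\mathrm{fold}\rangle\varphi\in\mathcal{L}^s(\Theta;\mu\alpha.\tau)$ if $\varphi\in\mathcal{L}^s(\Theta;\tau[\mu\alpha.\tau/\alpha])$; $X\in\mathcal{L}^s(\Theta;\tau)$ if $(X:\tau)\in\Theta$; weakening of $\Theta$ by a fresh variable; $(\mu^t X)\varphi,(\nu^t X)\varphi\in\mathcal{L}^s(\Theta;\tau)$ if $\varphi\in\mathcal{L}^s(\Theta,X:\tau;\tau)$; $(\exists i)\varphi\in\mathcal{L}^+(\Theta;\tau)$ if $\varphi\in\mathcal{L}^+(\Theta;\tau)$ and $i \mathrel{\mathrm{Pos}} \varphi$; $(\forall i)\varphi\in\mathcal{L}^-(\Theta;\tau)$ if $\varphi\in\mathcal{L}^-(\Theta;\tau)$ and $i\mathrel{\mathrm{Neg}}\varphi$; $\psi\Rightarrow\varphi\in\mathcal{L}^s(\,;\sigma\to\tau)$ if $\psi\in\mathcal{L}^{-s}(\,;\sigma)$ and $\varphi\in\mathcal{L}^s(\,;\tau)$ (empty fixpoint context), where $-\pm=\pm$, $-+=-$, $--=+$. The predicates are defined inductively: $i\mathrel{\mathrm{Pos}}\varphi$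 and $i\mathrel{\mathrm{Neg}}\varphi$ hold if $i$ is not free in $\varphi$; both are preserved by $\wedge,\vee$ and by the modalities $\langle\pi_j\rangle,\langle\mathrm{inj}_j\rangle,\langle\mathrm{fold}\rangle$; $i\mathrel{\mathrm{Pos}}(\psi\Rightarrow\varphi)$ if $i\mathrel{\mathrm{Neg}}\psi$ and $i\mathrel{\mathrm{Pos}}\varphi$; $i\mathrel{\mathrm{Neg}}(\psi\Rightarrow\varphi)$ if $i\mathrel{\mathrm{Pos}}\psi$ and $i\mathrel{\mathrm{Neg}}\varphi$; $i\mathrel{\mathrm{Pos}}(\exists j)\varphi$ if $i\mathrel{\mathrm{Pos}}\varphi$; $i\mathrel{\mathrm{Neg}}(\forall j)\varphi$ if $i\mathrel{\mathrm{Neg}}\varphi$; $i\mathrel{\mathrm{Pos}}(\mu^tX)\varphi$ if $i\mathrel{\mathrm{Pos}}\varphi$; $i\mathrel{\mathrm{Pos}}(\nu^tX)\varphi$ if $i\mathrel{\mathrm{Pos}}\varphi$ and $i$ not free in $t$; $i\mathrel{\mathrm{Neg}}(\nu^tX)\varphi$ if $i\mathrel{\mathrm{Neg}}\varphi$; $i\mathrel{\mathrm{Neg}}(\mu^tX)\varphi$ if $i\mathrel{\mathrm{Neg}}\varphi$ and $i$ not free in $t$. Write $\mathcal{L}^s(\tau)$ for $\mathcal{L}^s(\,;\tau)$. Semantics: a valuation $\rho$ of $\Theta$ maps each $(X:\sigma)\in\Theta$ to a subset $\rho(X)\subseteq[\![\sigma]\!]$ and each iteration variable to a natural number (so $[\![t]\!]\rho\in\mathbb{N}$).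 Then $[\![\mathrm{True}]\!]\rho=[\![\tau]\!]$, $[\![\mathrm{False}]\!]\rho=\emptyset$, $\wedge,\vee$ are $\cap,\cup$, $[\![X]\!]\rho=\rho(X)$, $[\![\langle()\rangle]\!]\rho=\{\top\}$, $[\![\langle\pi_i\rangle\varphi]\!]\rho=\{x\mid \pi_i(x)\in[\![\varphi]\!]\rho\}$, $[\![\langle\mathrm{inj}_i\rangle\varphi]\!]\rho=\{\mathrm{inj}_i(x)\mid x\in[\![\varphi]\!]\rho\}$, $[\![\langle\mathrm{fold}\rangle\varphi]\!]\rho=\{x\mid\mathrm{unfold}(x)\in[\![\varphi]\!]\rho\}$, $[\![\psi\Rightarrow\varphi]\!]\rho=\{f\mid\forall x\in[\![\psi]\!]\rho,\ f(x)\in[\![\varphi]\!]\rho\}$, $[\![(\exists i)\varphi]\!]\rho=\bigcup_{n}[\![\varphi]\!]\rho[n/i]$, $[\![(\forall i)\varphi]\!]\rho=\bigcap_{n}[\![\varphi]\!]\rho[n/i]$, and with $F(S)=[\![\varphi]\!]\rho[S/X]$ and $n=[\![t]\!]\rho$: $[\![(\mu^tX)\varphi]\!]\rho=F^n(\emptyset)$, $[\![(\nu^tX)\varphi]\!]\rho=F^n([\![\tau]\!])$. *)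

From Stdlib Require Import List Arith PeanoNat ClassicalEpsilon.
Import ListNotations.

(* Types  tau ::= 1 | tau x tau | tau -> tau | tau + tau | alpha | mu alpha.tau
   (type variables in de Bruijn notation).                              *)
Inductive ty : Type :=
| TOne : ty
| TProd : ty -> ty -> ty
| TArr : ty -> ty -> ty
| TSum : ty -> ty -> ty
| TVar : nat -> ty
| TMu : ty -> ty.

Definition ty_eq_dec : forall a b : ty, {a = b} + {a <> b}.
Proof. decide equality; apply Nat.eq_dec. Defined.

(* substitution of a CLOSED type s for variable k (no shifting needed) *)
Fixpoint tsubst (k : nat) (s : ty) (t : ty) : ty :=
  match t with
  | TOne => TOne
  | TProd a b => TProd (tsubst k s a) (tsubst k s b)
  | TArr a b => TArr (tsubst k s a) (tsubst k s b)
  | TSum a b => TSum (tsubst k s a) (tsubst k s b)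
  | TVar n => if Nat.eqb n k then s else if Nat.ltb k n then TVar (n - 1) else TVar n
  | TMu a => TMu (tsubst (S k) s a)
  end.

Definition unfold_ty (t : ty) : ty := tsubst 0 (TMu t) t.

Fixpoint closed_at (k : nat) (t : ty) : Prop :=
  match t with
  | TOne => True
  | TProd a b | TArr a b | TSum a b => closed_at k a /\ closed_at k b
  | TVar n => n < k
  | TMu a => closed_at (S k) a
  end.

Definition pure_type (t : ty) : Prop := closed_at 0 t.

Inductive rtok : Type :=
| RU : rtok                              (* the top token of 1 *)
| RFst : rtok -> rtok
| RSnd : rtok -> rtok
| RInl : option rtok -> rtok             (* None: "is a left injection" *)
| RInr : option rtok -> rtok
| RFun : list rtok -> rtok -> rtok       (* (X, b) : step-function token *)
| RFold : rtok -> rtok.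

Fixpoint depth (t : rtok) : nat :=
  match t with
  | RU => 1
  | RFst u | RSnd u | RFold u => S (depth u)
  | RInl None | RInr None => 1
  | RInl (Some u) | RInr (Some u) => S (depth u)
  | RFun Y c =>
      S (Nat.max (depth c)
           ((fix dl (l : list rtok) : nat :=
               match l with [] => 0 | u :: l => Nat.max (depth u) (dl l) end) Y))
  end.

Definition depthL (l : list rtok) : nat := fold_right (fun u m => Nat.max (depth u) m) 0 l.

Inductive wt : ty -> rtok -> Prop :=
| wt_unit : wt TOne RU
| wt_fst a b u : wt a u -> wt (TProd a b) (RFst u)
| wt_snd a b u : wt b u -> wt (TProd a b) (RSnd u)
| wt_inl a b o : (forall u, o = Some u -> wt a u) -> wt (TSum a b) (RInl o)
| wt_inr a b o : (forall u, o = Some u -> wt b u) -> wt (TSum a b) (RInr o)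
| wt_fun a b Y c : (forall y, In y Y -> wt a y) -> wt b c -> wt (TArr a b) (RFun Y c)
| wt_fold s u : wt (unfold_ty s) u -> wt (TMu s) (RFold u).

Definition fsts := flat_map (fun t => match t with RFst u => [u] | _ => [] end).
Definition snds := flat_map (fun t => match t with RSnd u => [u] | _ => [] end).
Definition inls := flat_map (fun t => match t with RInl (Some u) => [u] | _ => [] end).
Definition inrs := flat_map (fun t => match t with RInr (Some u) => [u] | _ => [] end).
Definition folds := flat_map (fun t => match t with RFold u => [u] | _ => [] end).
Definition fargs := flat_map (fun t => match t with RFun Y _ => Y | _ => [] end).
Definition fress := flat_map (fun t => match t with RFun _ c => [c] | _ => [] end).
Definition isInl (t : rtok) : Prop := match t with RInl _ => True | _ => False end.
Definition isInr (t : rtok) : Prop := match t with RInr _ => True | _ => False end.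

(* consistency predicate (fuel = bound on token depth) *)
Fixpoint con_f (n : nat) (τ : ty) (X : list rtok) {struct n} : Prop :=
  match X with
  | [] => True
  | _ :: _ =>
    match n with
    | 0 => False
    | S n =>
      match τ with
      | TOne => True
      | TProd a b => con_f n a (fsts X) /\ con_f n b (snds X)
      | TSum a b => (Forall isInl X /\ con_f n a (inls X))
                    \/ (Forall isInr X /\ con_f n b (inrs X))
      | TArr a b =>
          (forall t, In t X -> match t with RFun Y _ => con_f n a Y | _ => False end)
          /\ (forall I, incl I X -> con_f n a (fargs I) -> con_f n b (fress I))
      | TMu s => con_f n (unfold_ty s) (folds X)
      | TVar _ => False
      end
    end
  end.

Fixpoint ent_f (n : nat) (τ : ty) (X : list rtok) (t : rtok) {struct n} : Prop :=
  match n with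
  | 0 => False
  | S n =>
    match τ, t with
    | TOne, RU => X <> []
    | TProd a b, RFst u => ent_f n a (fsts X) u
    | TProd a b, RSnd u => ent_f n b (snds X) u
    | TSum a b, RInl o => (exists v, In (RInl v) X) /\
        match o with None => True | Some u => ent_f n a (inls X) u end
    | TSum a b, RInr o => (exists v, In (RInr v) X) /\
        match o with None => True | Some u => ent_f n b (inrs X) u end
    | TArr a b, RFun Y c =>
        ent_f n b
          (flat_map (fun s => match s with
                        | RFun Z d =>
                            if excluded_middle_informative (forall z, In z Z -> ent_f n a Y z)
                            then [d] else []
                        | _ => [] end) X) c
    | TMu s, RFold u => ent_f n (unfold_ty s) (folds X) u
    | _, _ => False
    end
  end.

Definition Con (τ : ty) (X : list rtok) : Prop :=
  (forall t, In t X -> wt τ t) /\ con_f (S (depthL X)) τ X.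

Definition Ent (τ : ty) (X : list rtok) (t : rtok) : Prop :=
  ent_f (S (Nat.max (depth t) (depthL X))) τ X t.

(* ideal elements = points of the Scott domain [[tau]] *)
Definition is_ideal (τ : ty) (x : rtok -> Prop) : Prop :=
  (forall X, (forall t, In t X -> x t) -> Con τ X) /\
  (forall X t, (forall u, In u X -> x u) -> Con τ [t] -> Ent τ X t -> x t).

Definition elem (τ : ty) : Type := { x : rtok -> Prop | is_ideal τ x }.
Definition carrier {τ} (x : elem τ) : rtok -> Prop := proj1_sig x.

Definition dle {τ} (x y : elem τ) : Prop := forall t, carrier x t -> carrier y t.

(* application of a continuous function (ideal of A -> B) to a point *)
Definition app (f x : rtok -> Prop) : rtok -> Prop :=
  fun c => exists Y, (forall u, In u Y -> x u) /\ f (RFun Y c).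

Definition injL (x : rtok -> Prop) : rtok -> Prop :=
  fun t => match t with RInl None => True | RInl (Some u) => x u | _ => False end.
Definition injR (x : rtok -> Prop) : rtok -> Prop :=
  fun t => match t with RInr None => True | RInr (Some u) => x u | _ => False end.

Definition directed {τ} (D : elem τ -> Prop) : Prop :=
  (exists d, D d) /\
  (forall d1 d2, D d1 -> D d2 -> exists d3, D d3 /\ dle d1 d3 /\ dle d2 d3).

Definition is_lub {τ} (D : elem τ -> Prop) (s : elem τ) : Prop :=
  (forall d, D d -> dle d s) /\ (forall u, (forall d, D d -> dle d u) -> dle s u).

Definition upper {τ} (U : elem τ -> Prop) : Prop :=
  forall x y, dle x y -> U x -> U y.

Definition scott_open {τ} (U : elem τ -> Prop) : Prop :=
  upper U /\
  (forall D s, directed D -> is_lub D s -> U s -> exists d, D d /\ U d).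

Definition saturated {τ} (K : elem τ -> Prop) : Prop := upper K.

Definition compact {τ} (K : elem τ -> Prop) : Prop :=
  forall (I : Type) (O : I -> elem τ -> Prop),
    (forall k, scott_open (O k)) ->
    (forall x, K x -> exists k, O k x) ->
    exists l : list I, forall x, K x -> exists k, In k l /\ O k x.

Inductive iterm : Type := IVar : nat -> iterm | IZero : iterm | ISucc : iterm -> iterm.

Inductive form : Type :=
| FTrue | FFalse
| FAnd : form -> form -> form
| FOr : form -> form -> form
| FUnit : form
| FPi : bool -> form -> form            (* <pi_1> (true), <pi_2> (false) *)
| FInj : bool -> form -> form           (* <inj_1> (true), <inj_2> (false) *)
| FFold : form -> form
| FVar : nat -> form
| FMu : iterm -> nat -> form -> form
| FNu : iterm -> nat -> form -> form
| FEx : nat -> form -> form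
| FAll : nat -> form -> form
| FImp : form -> form -> form.

Fixpoint fvt (i : nat) (t : iterm) : Prop :=
  match t with IVar j => j = i | IZero => False | ISucc t => fvt i t end.

Fixpoint fvi (i : nat) (φ : form) : Prop :=
  match φ with
  | FTrue | FFalse | FUnit | FVar _ => False
  | FAnd a b | FOr a b | FImp a b => fvi i a \/ fvi i b
  | FPi _ a | FInj _ a | FFold a => fvi i a
  | FMu t _ a | FNu t _ a => fvt i t \/ fvi i a
  | FEx j a | FAll j a => j <> i /\ fvi i a
  end.

Inductive Pos : nat -> form -> Prop :=
| Pos_nf i φ : ~ fvi i φ -> Pos i φ
| Pos_and i a b : Pos i a -> Pos i b -> Pos i (FAnd a b)
| Pos_or i a b : Pos i a -> Pos i b -> Pos i (FOr a b)
| Pos_pi i c a : Pos i a -> Pos i (FPi c a)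
| Pos_inj i c a : Pos i a -> Pos i (FInj c a)
| Pos_fold i a : Pos i a -> Pos i (FFold a)
| Pos_imp i a b : Neg i a -> Pos i b -> Pos i (FImp a b)
| Pos_ex i j a : Pos i a -> Pos i (FEx j a)
| Pos_mu i t X a : Pos i a -> Pos i (FMu t X a)
| Pos_nu i t X a : Pos i a -> ~ fvt i t -> Pos i (FNu t X a)
with Neg : nat -> form -> Prop :=
| Neg_nf i φ : ~ fvi i φ -> Neg i φ
| Neg_and i a b : Neg i a -> Neg i b -> Neg i (FAnd a b)
| Neg_or i a b : Neg i a -> Neg i b -> Neg i (FOr a b)
| Neg_pi i c a : Neg i a -> Neg i (FPi c a)
| Neg_inj i c a : Neg i a -> Neg i (FInj c a)
| Neg_fold i a : Neg i a -> Neg i (FFold a)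
| Neg_imp i a b : Pos i a -> Neg i b -> Neg i (FImp a b)
| Neg_all i j a : Neg i a -> Neg i (FAll j a)
| Neg_nu i t X a : Neg i a -> Neg i (FNu t X a)
| Neg_mu i t X a : Neg i a -> ~ fvt i t -> Neg i (FMu t X a).

Inductive sign : Type := SPM | SPlus | SMinus.   (* ±, +, - *)
Definition negs (s : sign) : sign :=
  match s with SPM => SPM | SPlus => SMinus | SMinus => SPlus end.

Definition fctx := list (nat * ty).

(* wf s Θ τ φ  <->  φ ∈ L^s(Θ; τ) *)
Inductive wf : sign -> fctx -> ty -> form -> Prop :=
| wf_true s Θ τ : wf s Θ τ FTrue
| wf_false s Θ τ : wf s Θ τ FFalse
| wf_and s Θ τ a b : wf s Θ τ a -> wf s Θ τ b -> wf s Θ τ (FAnd a b)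
| wf_or s Θ τ a b : wf s Θ τ a -> wf s Θ τ b -> wf s Θ τ (FOr a b)
| wf_unit s Θ : wf s Θ TOne FUnit
| wf_pi1 s Θ t1 t2 a : wf s Θ t1 a -> wf s Θ (TProd t1 t2) (FPi true a)
| wf_pi2 s Θ t1 t2 a : wf s Θ t2 a -> wf s Θ (TProd t1 t2) (FPi false a)
| wf_inj1 s Θ t1 t2 a : wf s Θ t1 a -> wf s Θ (TSum t1 t2) (FInj true a)
| wf_inj2 s Θ t1 t2 a : wf s Θ t2 a -> wf s Θ (TSum t1 t2) (FInj false a)
| wf_fold s Θ t a : wf s Θ (unfold_ty t) a -> wf s Θ (TMu t) (FFold a)
| wf_var s Θ X τ : In (X, τ) Θ -> wf s Θ τ (FVar X)
| wf_weak s Θ τ a Y σ : wf s Θ τ a -> ~ In Y (map fst Θ) -> wf s (Θ ++ [(Y, σ)]) τ a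
| wf_mu s Θ τ t X a : ~ In X (map fst Θ) -> wf s (Θ ++ [(X, τ)]) τ a -> wf s Θ τ (FMu t X a)
| wf_nu s Θ τ t X a : ~ In X (map fst Θ) -> wf s (Θ ++ [(X, τ)]) τ a -> wf s Θ τ (FNu t X a)
| wf_ex Θ τ i a : wf SPlus Θ τ a -> Pos i a -> wf SPlus Θ τ (FEx i a)
| wf_all Θ τ i a : wf SMinus Θ τ a -> Neg i a -> wf SMinus Θ τ (FAll i a)
| wf_imp s σ τ a b : wf (negs s) [] σ a -> wf s [] τ b -> wf s [] (TArr σ τ) (FImp a b).

Definition fixval : Type := nat -> forall σ : ty, elem σ -> Prop.
Definition fixval0 : fixval := fun _ _ _ => False.

Definition upd (ρ : fixval) (X : nat) (τ : ty) (S : elem τ -> Prop) : fixval :=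
  fun Y σ =>
    if Nat.eqb Y X then
      match ty_eq_dec τ σ with
      | left e => eq_rect τ (fun σ => elem σ -> Prop) S σ e
      | right _ => ρ Y σ
      end
    else ρ Y σ.

Definition iupd (ρ : nat -> nat) (i m : nat) : nat -> nat :=
  fun j => if Nat.eqb j i then m else ρ j.

Fixpoint ieval (ρ : nat -> nat) (t : iterm) : nat :=
  match t with IVar i => ρ i | IZero => 0 | ISucc t => S (ieval ρ t) end.

Fixpoint sem (φ : form) (τ : ty) (ρX : fixval) (ρi : nat -> nat) {struct φ} : elem τ -> Prop :=
  match φ with
  | FTrue => fun _ => True
  | FFalse => fun _ => False
  | FAnd a b => fun x => sem a τ ρX ρi x /\ sem b τ ρX ρi x
  | FOr a b => fun x => sem a τ ρX ρi x \/ sem b τ ρX ρi x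
  | FUnit => match τ as τ0 return elem τ0 -> Prop with
             | TOne => fun x => carrier x RU        (* x = top *)
             | _ => fun _ => False end
  | FPi c a => match τ as τ0 return elem τ0 -> Prop with
             | TProd t1 t2 => fun x =>
                 exists y : elem (if c then t1 else t2),
                   (forall u, carrier y u <-> carrier x (if c then RFst u else RSnd u))
                   /\ sem a _ ρX ρi y
             | _ => fun _ => False end
  | FInj c a => match τ as τ0 return elem τ0 -> Prop with
             | TSum t1 t2 => fun x =>
                 exists y : elem (if c then t1 else t2),
                   sem a _ ρX ρi y /\
                   (forall u, carrier x u <-> (if c then injL else injR) (carrier y) u)
             | _ => fun _ => False end
  | FFold a => match τ as τ0 return elem τ0 -> Prop with
             | TMu s => fun x =>
                 exists y : elem (unfold_ty s),
                   (forall u, carrier y u <-> carrier x (RFold u))   (* y = unfold x *)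
                   /\ sem a _ ρX ρi y
             | _ => fun _ => False end
  | FVar X => ρX X τ
  | FMu t X a => Nat.iter (ieval ρi t) (fun S => sem a τ (upd ρX X τ S) ρi) (fun _ => False)
  | FNu t X a => Nat.iter (ieval ρi t) (fun S => sem a τ (upd ρX X τ S) ρi) (fun _ => True)
  | FEx i a => fun x => exists m, sem a τ ρX (iupd ρi i m) x
  | FAll i a => fun x => forall m, sem a τ ρX (iupd ρi i m) x
  | FImp a b => match τ as τ0 return elem τ0 -> Prop with
             | TArr t1 t2 => fun f =>
                 forall x : elem t1, sem a t1 ρX ρi x ->
                   exists y : elem t2,
                     (forall d, carrier y d <-> app (carrier f) (carrier x) d)  (* y = f x *)
                     /\ sem b t2 ρX ρi y
             | _ => fun _ => False end
  end.

From Pilot Require Import Defs.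
From Stdlib Require Import List PeanoNat Lia Classical ClassicalEpsilon
  FunctionalExtensionality PropExtensionality ProofIrrelevance Eqdep_dec Cantor.
Import ListNotations.

(* Points of [[τ]] are ideals of tokens, so [[τ]] lies in the Cantor space of token sets,
   where each set {x | t ∈ x} is clopen.  We prove a stronger invariant by induction on
   formulas: positive formulas denote Scott-open sets, negative ones saturated sets closed
   under pointwise limits of sequences of points, and ± formulas sets with both properties.
   Such closed sets are compact: if a Scott-open cover had no finite subcover, deciding the
   tokens one at a time (König's lemma) would produce a limit point covered by no member.
   Every connective but implication acts by unions, intersections, finite iteration and
   token preimages.
   For ψ ⇒ φ: if [[ψ]] is compact and [[φ]] open, the condition f([[ψ]]) ⊆ [[φ]] is
   Scott-open by a finite subcover argument; if [[ψ]] is open and [[φ]] closed and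
   saturated, it suffices to test f on finitely generated points ↓X, and f(↓X) consists
   of the c with (X, c) ∈ f, which is a closed condition on f. *)

(** * Unfolding consistency and entailment *)

Lemma depth_pos t : 1 <= depth t.
Proof. destruct t as [| | |[]|[]| |]; simpl; lia. Qed.

Lemma depth_RFun Y c : depth (RFun Y c) = S (Nat.max (depth c) (depthL Y)).
Proof. reflexivity. Qed.

Lemma depth_le_depthL u X : In u X -> depth u <= depthL X.
Proof.
  induction X as [|v X IH]; simpl; [tauto|].
  intros [<-|Hu]; [lia|]. specialize (IH Hu). lia.
Qed.

Lemma depthL_lt L n : 0 < n -> (forall v, In v L -> depth v < n) -> depthL L < n.
Proof.
  intros Hn HL. induction L as [|v L IH]; simpl; [lia|].
  apply Nat.max_lub_lt; [apply HL; left|apply IH; intros; apply HL; right]; auto.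
Qed.

Lemma depthL_pos X : X <> [] -> 0 < depthL X.
Proof.
  destruct X as [|u X]; [congruence|]. intros _.
  pose proof (depth_pos u). pose proof (depth_le_depthL u (u :: X) (or_introl eq_refl)). lia.
Qed.

Definition below (X L : list rtok) : Prop :=
  forall v, In v L -> exists u, In u X /\ depth v < depth u.

Lemma depthL_below X L n : 0 < n -> depthL X <= n -> below X L -> depthL L < n.
Proof.
  intros Hn HX HL. apply depthL_lt; auto. intros v Hv.
  destruct (HL v Hv) as [u [Hu Hvu]]. pose proof (depth_le_depthL u X Hu). lia.
Qed.

Lemma below_flat_map (f : rtok -> list rtok) I X :
  (forall s v, In v (f s) -> depth v < depth s) -> incl I X -> below X (flat_map f I).
Proof.
  intros Hf HI v Hv. apply in_flat_map in Hv as [s [Hs Hv]]. exists s. auto.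
Qed.

Ltac shallower :=
  let s := fresh "s" in let v := fresh "v" in let Hv := fresh "Hv" in
  intros s v Hv; destruct s; simpl in Hv;
  repeat match type of Hv with
         | In _ (match ?o with _ => _ end) => destruct o; simpl in Hv
         end;
  repeat match type of Hv with
         | _ \/ _ => destruct Hv as [<-|Hv]
         | False => destruct Hv
         end;
  rewrite ?depth_RFun; simpl;
  try (match type of Hv with In _ _ => pose proof (depth_le_depthL _ _ Hv) end); lia.

Definition con_body (c : ty -> list rtok -> Prop) (τ : ty) (X : list rtok) : Prop :=
  match τ with
  | TOne => True
  | TProd a b => c a (fsts X) /\ c b (snds X)
  | TSum a b => (Forall isInl X /\ c a (inls X)) \/ (Forall isInr X /\ c b (inrs X))
  | TArr a b =>
      (forall t, In t X -> match t with RFun Y _ => c a Y | _ => False end)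
      /\ (forall I, incl I X -> c a (fargs I) -> c b (fress I))
  | TMu s => c (unfold_ty s) (folds X)
  | TVar _ => False
  end.

Lemma con_f_S n τ u X : con_f (S n) τ (u :: X) = con_body (con_f n) τ (u :: X).
Proof. reflexivity. Qed.

Lemma con_body_ext c c' τ X : X <> [] ->
  (forall σ L, depthL L < depthL X -> (c σ L <-> c' σ L)) ->
  (con_body c τ X <-> con_body c' τ X).
Proof.
  intros HX Hcc.
  assert (B : forall f I, (forall s v, In v (f s) -> depth v < depth s) -> incl I X ->
              forall σ, c σ (flat_map f I) <-> c' σ (flat_map f I)).
  { intros f I Hf HI σ. apply Hcc, (depthL_below X); auto using depthL_pos, below_flat_map. }
  destruct τ as [|a b|a b|a b|n|s]; simpl.
  - tauto.
  - unfold fsts, snds. rewrite !B by (shallower || apply incl_refl). tauto.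
  - assert (E1 : forall t, In t X -> (match t with RFun Y _ => c a Y | _ => False end <->
                                      match t with RFun Y _ => c' a Y | _ => False end)).
    { intros [| | | | |Y d|] Ht; try tauto. apply Hcc, (depthL_below X); auto using depthL_pos.
      intros v Hv. exists (RFun Y d). split; auto. rewrite depth_RFun.
      pose proof (depth_le_depthL _ _ Hv). lia. }
    assert (E2 : forall I, incl I X ->
              ((c a (fargs I) -> c b (fress I)) <-> (c' a (fargs I) -> c' b (fress I)))).
    { intros I HI. unfold fargs, fress. rewrite !B by (shallower || exact HI). tauto. }
    split; intros [H1 H2]; split.
    + intros t Ht. apply (E1 t Ht), H1, Ht.
    + intros I HI. apply (E2 I HI), H2, HI.
    + intros t Ht. apply (E1 t Ht), H1, Ht.
    + intros I HI. apply (E2 I HI), H2, HI.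
  - unfold inls, inrs. rewrite !B by (shallower || apply incl_refl). tauto.
  - tauto.
  - unfold folds. rewrite !B by (shallower || apply incl_refl). tauto.
Qed.

Lemma con_f_fuel n m τ X : depthL X < n -> depthL X < m -> (con_f n τ X <-> con_f m τ X).
Proof.
  revert m τ X. induction n as [|n IH]; intros [|m] τ [|u X] Hn Hm; try lia; [simpl; tauto|].
  rewrite !con_f_S. apply con_body_ext; [discriminate|]. intros σ L HL. apply IH; lia.
Qed.

Definition con (τ : ty) (X : list rtok) : Prop := con_f (S (depthL X)) τ X.

Lemma con_nil τ : con τ [].
Proof. exact I. Qed.

Lemma con_unfold τ X : X <> [] -> (con τ X <-> con_body con τ X).
Proof.
  destruct X as [|u X]; [congruence|]. intros _.
  unfold con at 1. rewrite con_f_S. apply con_body_ext; [discriminate|].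
  intros σ L HL. apply con_f_fuel; lia.
Qed.

Definition fun_results (e : list rtok -> rtok -> Prop) (X Y : list rtok) : list rtok :=
  flat_map (fun s => match s with
                     | RFun Z d =>
                         if excluded_middle_informative (forall z, In z Z -> e Y z)
                         then [d] else []
                     | _ => [] end) X.

Lemma in_fun_results e X Y d :
  In d (fun_results e X Y) <-> exists Z, In (RFun Z d) X /\ forall z, In z Z -> e Y z.
Proof.
  unfold fun_results. rewrite in_flat_map. split.
  - intros [[| | | | |Z d'|] [Hs Hd]]; simpl in Hd; try tauto.
    destruct excluded_middle_informative; simpl in Hd; [|tauto].
    destruct Hd as [<-|[]]. eauto.
  - intros [Z [HZ Hz]]. exists (RFun Z d). split; auto.
    destruct excluded_middle_informative; simpl; tauto.
Qed.

Lemma fun_results_ext e e' X Y :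
  (forall Z d z, In (RFun Z d) X -> In z Z -> (e Y z <-> e' Y z)) ->
  fun_results e X Y = fun_results e' X Y.
Proof.
  intros H. induction X as [|s X IH]; simpl; auto.
  rewrite IH by (intros; eapply H; simpl; eauto). f_equal.
  destruct s as [| | | | |Z d|]; auto.
  assert (E : (forall z, In z Z -> e Y z) <-> (forall z, In z Z -> e' Y z)).
  { split; intros Hz z Hin; eapply H; eauto; left; reflexivity. }
  do 2 destruct excluded_middle_informative; tauto.
Qed.

Definition ent_body (e : ty -> list rtok -> rtok -> Prop) (τ : ty) (X : list rtok) (t : rtok)
  : Prop :=
  match τ, t with
  | TOne, RU => X <> []
  | TProd a b, RFst u => e a (fsts X) u
  | TProd a b, RSnd u => e b (snds X) u
  | TSum a b, RInl o =>
      (exists v, In (RInl v) X) /\ match o with None => True | Some u => e a (inls X) u end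
  | TSum a b, RInr o =>
      (exists v, In (RInr v) X) /\ match o with None => True | Some u => e b (inrs X) u end
  | TArr a b, RFun Y c => e b (fun_results (e a) X Y) c
  | TMu s, RFold u => e (unfold_ty s) (folds X) u
  | _, _ => False
  end.

Lemma ent_f_S n τ X t : ent_f (S n) τ X t = ent_body (ent_f n) τ X t.
Proof. reflexivity. Qed.

Lemma ent_body_ext e e' τ X t :
  (forall σ L u, depth u < Nat.max (depth t) (depthL X) ->
     depthL L < Nat.max (depth t) (depthL X) -> (e σ L u <-> e' σ L u)) ->
  (ent_body e τ X t <-> ent_body e' τ X t).
Proof.
  set (m := Nat.max (depth t) (depthL X)). intros Hee.
  assert (Ht : depth t <= m) by (unfold m; lia).
  assert (HX : depthL X <= m) by (unfold m; lia).
  assert (Hm : 0 < m) by (pose proof (depth_pos t); lia).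
  assert (B : forall f, (forall s v, In v (f s) -> depth v < depth s) ->
              depthL (flat_map f X) < m).
  { intros f Hf. apply (depthL_below X); auto using below_flat_map, incl_refl. }
  clearbody m.
  destruct τ as [|a b|a b|a b|n|s], t as [|u|u|[u|]|[u|]|Y c|u];
    rewrite ?depth_RFun in Ht; simpl in *; try tauto.
  - apply Hee; [lia|]. apply B. shallower.
  - apply Hee; [lia|]. apply B. shallower.
  - assert (HY : depthL Y < m) by lia.
    rewrite (fun_results_ext (e a) (e' a) X Y).
    + apply Hee; [lia|]. apply B. shallower.
    + intros Z d z HZ Hz. apply Hee; auto.
      pose proof (depth_le_depthL _ _ HZ). pose proof (depth_le_depthL _ _ Hz).
      rewrite depth_RFun in *. lia.
  - rewrite Hee; [tauto|lia|]. apply B. shallower.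
  - rewrite Hee; [tauto|lia|]. apply B. shallower.
  - apply Hee; [lia|]. apply B. shallower.
Qed.

Lemma ent_f_fuel n m τ X t :
  depth t < n -> depthL X < n -> depth t < m -> depthL X < m ->
  (ent_f n τ X t <-> ent_f m τ X t).
Proof.
  revert m τ X t. induction n as [|n IH]; intros [|m] τ X t Htn HXn Htm HXm; try lia.
  rewrite !ent_f_S. apply ent_body_ext. intros σ L u Hu HL. apply IH; lia.
Qed.

Lemma ent_unfold τ X t : Ent τ X t <-> ent_body Ent τ X t.
Proof.
  unfold Ent at 1. rewrite ent_f_S. apply ent_body_ext.
  intros σ L u Hu HL. apply ent_f_fuel; lia.
Qed.

Ltac solve_in_proj :=
  unfold fsts, snds, inls, inrs, folds; rewrite in_flat_map; split;
  [ let t := fresh in let Ht := fresh in let Hu := fresh in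
    intros [t [Ht Hu]]; destruct t as [| | |[]|[]| |]; simpl in Hu;
    repeat match type of Hu with _ \/ _ => destruct Hu as [<-|Hu] | False => destruct Hu end;
    eauto
  | intros; eexists; split; [eassumption|simpl; auto] ].

Lemma in_fsts u X : In u (fsts X) <-> In (RFst u) X.
Proof. solve_in_proj. Qed.
Lemma in_snds u X : In u (snds X) <-> In (RSnd u) X.
Proof. solve_in_proj. Qed.
Lemma in_inls u X : In u (inls X) <-> In (RInl (Some u)) X.
Proof. solve_in_proj. Qed.
Lemma in_inrs u X : In u (inrs X) <-> In (RInr (Some u)) X.
Proof. solve_in_proj. Qed.
Lemma in_folds u X : In u (folds X) <-> In (RFold u) X.
Proof. solve_in_proj. Qed.
Lemma in_fress c X : In c (fress X) <-> exists Y, In (RFun Y c) X.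
Proof.
  unfold fress. rewrite in_flat_map. split.
  - intros [[| | | | |Y d|] [Ht Hc]]; simpl in Hc; try tauto. destruct Hc as [<-|[]]. eauto.
  - intros [Y HY]. exists (RFun Y c). simpl; auto.
Qed.
Lemma in_fargs u X : In u (fargs X) <-> exists Y c, In (RFun Y c) X /\ In u Y.
Proof.
  unfold fargs. rewrite in_flat_map. split.
  - intros [[| | | | |Y c|] [Ht Hu]]; simpl in Hu; try tauto. eauto.
  - intros [Y [c [HY Hu]]]. exists (RFun Y c). auto.
Qed.

Lemma incl_flat_map {A B} (f : A -> list B) X X' :
  incl X X' -> incl (flat_map f X) (flat_map f X').
Proof.
  intros H v Hv. apply in_flat_map in Hv as [x [Hx Hv]]. apply in_flat_map. eauto.
Qed.

Lemma incl_nil_r {A} (I : list A) : incl I [] -> I = [].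
Proof. destruct I as [|a I]; auto. intros H. destruct (H a (or_introl eq_refl)). Qed.

Lemma con_incl τ X X' : incl X X' -> con τ X' -> con τ X.
Proof.
  remember (S (depthL X')) as n eqn:Hn. assert (HX' : depthL X' < n) by lia. clear Hn.
  revert τ X X' HX'. induction n as [|n IH]; intros τ X X' HX' Hi Hc; [lia|].
  destruct X as [|x X]; [apply con_nil|].
  assert (Hne : X' <> []) by (intros ->; apply incl_nil_r in Hi; discriminate).
  assert (IHp : forall f σ, (forall s v, In v (f s) -> depth v < depth s) ->
                con σ (flat_map f X') -> con σ (flat_map f (x :: X))).
  { intros f σ Hf. apply IH; [|apply incl_flat_map, Hi].
    enough (depthL (flat_map f X') < depthL X') by lia.
    apply (depthL_below X'); auto using depthL_pos, below_flat_map, incl_refl. }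
  apply con_unfold in Hc; [|exact Hne]. apply con_unfold; [discriminate|].
  destruct τ as [|a b|a b|a b|m|s]; cbn [con_body] in Hc |- *; auto.
  - destruct Hc. split; apply IHp; auto; shallower.
  - destruct Hc as [H1 H2]. split.
    + intros t Ht. apply H1, Hi, Ht.
    + intros I HI. apply H2. eapply incl_tran; eauto.
  - rewrite !Forall_forall in *.
    destruct Hc as [[Hf Hc]|[Hf Hc]]; [left|right]; split; auto; apply IHp; auto; shallower.
  - apply IHp; auto; shallower.
Qed.

Lemma ent_incl τ X X' t : incl X X' -> Ent τ X t -> Ent τ X' t.
Proof.
  remember (S (depth t)) as n eqn:Hn. assert (Ht : depth t < n) by lia. clear Hn.
  revert τ X X' t Ht. induction n as [|n IH]; intros τ X X' t Ht Hi He; [lia|].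
  rewrite ent_unfold in *.
  destruct τ, t as [|u|u|[u|]|[u|]|Y c|u]; rewrite ?depth_RFun in Ht;
    simpl in Ht, He |- *; try tauto.
  - intros ->. apply incl_nil_r in Hi. auto.
  - eapply IH; [lia|apply incl_flat_map, Hi|exact He].
  - eapply IH; [lia|apply incl_flat_map, Hi|exact He].
  - eapply IH; [lia|apply incl_flat_map, Hi|exact He].
  - destruct He as [[v Hv] He]. split; [exists v; auto|].
    eapply IH; [lia|apply incl_flat_map, Hi|exact He].
  - destruct He as [[v Hv] _]. split; [exists v; auto|exact I].
  - destruct He as [[v Hv] He]. split; [exists v; auto|].
    eapply IH; [lia|apply incl_flat_map, Hi|exact He].
  - destruct He as [[v Hv] _]. split; [exists v; auto|exact I].
  - eapply IH; [lia|apply incl_flat_map, Hi|exact He].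
Qed.

Lemma ent_in τ X t : wt τ t -> In t X -> Ent τ X t.
Proof.
  intros Hw. revert X. induction Hw; intros X Hin; apply ent_unfold; simpl.
  - intros ->. destruct Hin.
  - apply IHHw, in_fsts, Hin.
  - apply IHHw, in_snds, Hin.
  - split; [eauto|]. destruct o; auto. apply H0, in_inls; auto.
  - split; [eauto|]. destruct o; auto. apply H0, in_inrs; auto.
  - apply IHHw, in_fun_results. eauto.
  - apply IHHw, in_folds, Hin.
Qed.

Lemma ent_nil τ t : ~ Ent τ [] t.
Proof.
  remember (S (depth t)) as n eqn:Hn. assert (Ht : depth t < n) by lia. clear Hn.
  revert τ t Ht. induction n as [|n IH]; intros τ t Ht He; [lia|].
  rewrite ent_unfold in He.
  destruct τ, t as [|u|u|[u|]|[u|]|Y c|u]; rewrite ?depth_RFun in Ht;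
    simpl in Ht, He; try tauto; try (destruct He as [[v []] _]).
  all: eapply IH; [|exact He]; lia.
Qed.

(** * Points and their projections *)

Lemma elem_ext {τ} (x y : elem τ) : (forall t, carrier x t <-> carrier y t) -> x = y.
Proof.
  destruct x as [x Hx], y as [y Hy]; simpl. intros H.
  assert (x = y) as -> by (extensionality t; apply propositional_extensionality; auto).
  f_equal. apply proof_irrelevance.
Qed.

Lemma Con_of_carrier {τ} (x : elem τ) X : (forall t, In t X -> carrier x t) -> Con τ X.
Proof. destruct x as [x [Hc He]]; simpl; auto. Qed.

Lemma con_of_carrier {τ} (x : elem τ) X : (forall t, In t X -> carrier x t) -> con τ X.
Proof. intros H. apply (Con_of_carrier x X H). Qed.

Lemma Con1_of_carrier {τ} (x : elem τ) t : carrier x t -> Con τ [t].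
Proof. intros H. apply (Con_of_carrier x). intros u [<-|[]]; auto. Qed.

Lemma wt_of_carrier {τ} (x : elem τ) t : carrier x t -> wt τ t.
Proof. intros H. apply (Con1_of_carrier x t H). left; auto. Qed.

Lemma carrier_of_Ent {τ} (x : elem τ) X t :
  (forall u, In u X -> carrier x u) -> Con τ [t] -> Ent τ X t -> carrier x t.
Proof. destruct x as [x [Hc He]]; simpl; eauto. Qed.

Lemma directed_bound_tokens {τ} (D : elem τ -> Prop) X : directed D ->
  (forall t, In t X -> exists d, D d /\ carrier d t) ->
  exists d, D d /\ forall t, In t X -> carrier d t.
Proof.
  intros [[d0 Hd0] Hdir]. induction X as [|t X IH]; intros H.
  - exists d0. split; auto. intros t [].
  - destruct IH as [d1 [Hd1 H1]]; [intros; apply H; right; auto|].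
    destruct (H t (or_introl eq_refl)) as [d2 [Hd2 H2]].
    destruct (Hdir d1 d2 Hd1 Hd2) as [d3 [Hd3 [Hl Hr]]].
    exists d3. split; auto. intros u [<-|Hu]; auto.
Qed.

Lemma directed_bound_list {τ} (D : elem τ -> Prop) (l : list (elem τ)) : directed D ->
  (forall d, In d l -> D d) -> exists d, D d /\ forall d', In d' l -> dle d' d.
Proof.
  intros [[d0 Hd0] Hdir]. induction l as [|d l IH]; intros H.
  - exists d0. split; auto. intros d [].
  - destruct IH as [d1 [Hd1 H1]]; [intros; apply H; right; auto|].
    destruct (Hdir d1 d Hd1 (H d (or_introl eq_refl))) as [d3 [Hd3 [Hl Hr]]].
    exists d3. split; auto. intros d' [<-|Hd'] t Ht; [apply Hr, Ht|apply Hl, (H1 d' Hd'), Ht].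
Qed.

(* The union of a directed family of ideals is an ideal, hence the least upper bound. *)
Lemma carrier_lub {τ} (D : elem τ -> Prop) s : directed D -> is_lub D s ->
  forall t, carrier s t <-> exists d, D d /\ carrier d t.
Proof.
  intros Hdir [Hub Hleast] t. split; [|intros [d [Hd Ht]]; exact (Hub d Hd t Ht)].
  assert (Hid : is_ideal τ (fun t => exists d, D d /\ carrier d t)).
  { split.
    - intros X HX. destruct (directed_bound_tokens D X Hdir HX) as [d [_ Hd]].
      exact (Con_of_carrier d X Hd).
    - intros X u HX Hc He. destruct (directed_bound_tokens D X Hdir HX) as [d [Hd HdX]].
      exists d. split; auto. eapply carrier_of_Ent; eauto. }
  apply (Hleast (exist _ _ Hid)). intros d Hd u Hu. exists d; auto.
Qed.

Lemma dle_refl {τ} (x : elem τ) : dle x x.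
Proof. intros t H; exact H. Qed.

Record token_embedding (σ τ : ty) (h : rtok -> rtok) : Prop := {
  embedding_Con : forall X, Con σ (map h X) -> Con τ X;
  embedding_Con1 : forall t, Con τ [t] -> Con σ [h t];
  embedding_Ent : forall X t, Ent τ X t -> Ent σ (map h X) (h t) }.

Lemma embedding_ideal {σ τ h} (E : token_embedding σ τ h) (x : elem σ) :
  is_ideal τ (fun u => carrier x (h u)).
Proof.
  split.
  - intros X HX. apply (embedding_Con _ _ _ E), (Con_of_carrier x).
    intros t Ht. apply in_map_iff in Ht as [u [<- Hu]]. auto.
  - intros X t HX Hc He. apply (carrier_of_Ent x (map h X)).
    + intros u Hu. apply in_map_iff in Hu as [v [<- Hv]]. auto.
    + apply (embedding_Con1 _ _ _ E), Hc.
    + apply (embedding_Ent _ _ _ E), He.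
Qed.

Definition restrict {σ τ h} (E : token_embedding σ τ h) (x : elem σ) : elem τ :=
  exist _ _ (embedding_ideal E x).

Lemma flat_map_map_section (f : rtok -> list rtok) (h : rtok -> rtok) X :
  (forall u, f (h u) = [u]) -> flat_map f (map h X) = X.
Proof. intros H. induction X as [|u X IH]; simpl; [|rewrite H, IH]; reflexivity. Qed.

Ltac embedding_wt :=
  let t := fresh "t" in let Ht := fresh "Ht" in let Hw' := fresh "Hw" in
  intros t Ht; match goal with Hw : forall _, In _ _ -> wt _ _ |- _ =>
    pose proof (Hw _ (in_map _ _ _ Ht)) as Hw'; inversion Hw'; subst; auto end.

Lemma fst_embedding a b : token_embedding (TProd a b) a RFst.
Proof.
  split.
  - intros X [Hw Hc]. split; [embedding_wt|].
    destruct X as [|u X]; [apply con_nil|].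
    apply con_unfold in Hc as [Hc _]; [|discriminate].
    unfold fsts in Hc. rewrite flat_map_map_section in Hc; auto.
  - intros t [Hw Hc]. split.
    + intros t' [<-|[]]. constructor. apply Hw. left; auto.
    + apply con_unfold; [discriminate|]. split; [exact Hc|apply con_nil].
  - intros X t He. apply ent_unfold. cbn [ent_body].
    unfold fsts. rewrite flat_map_map_section; auto.
Qed.

Lemma snd_embedding a b : token_embedding (TProd a b) b RSnd.
Proof.
  split.
  - intros X [Hw Hc]. split; [embedding_wt|].
    destruct X as [|u X]; [apply con_nil|].
    apply con_unfold in Hc as [_ Hc]; [|discriminate].
    unfold snds in Hc. rewrite flat_map_map_section in Hc; auto.
  - intros t [Hw Hc]. split.
    + intros t' [<-|[]]. constructor. apply Hw. left; auto.
    + apply con_unfold; [discriminate|]. split; [apply con_nil|exact Hc].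
  - intros X t He. apply ent_unfold. cbn [ent_body].
    unfold snds. rewrite flat_map_map_section; auto.
Qed.

Lemma fold_embedding s : token_embedding (TMu s) (unfold_ty s) RFold.
Proof.
  split.
  - intros X [Hw Hc]. split; [embedding_wt|].
    destruct X as [|u X]; [apply con_nil|].
    apply con_unfold in Hc; [|discriminate].
    cbn [con_body] in Hc. unfold folds in Hc. rewrite flat_map_map_section in Hc; auto.
  - intros t [Hw Hc]. split.
    + intros t' [<-|[]]. constructor. apply Hw. left; auto.
    + apply con_unfold; [discriminate|]. exact Hc.
  - intros X t He. apply ent_unfold. cbn [ent_body].
    unfold folds. rewrite flat_map_map_section; auto.
Qed.

Lemma inl_embedding a b : token_embedding (TSum a b) a (fun u => RInl (Some u)).
Proof.
  split.
  - intros X [Hw Hc]. split; [embedding_wt|].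
    destruct X as [|u X]; [apply con_nil|].
    apply con_unfold in Hc as [[_ Hc]|[Hr _]]; [| |discriminate].
    + unfold inls in Hc. rewrite flat_map_map_section in Hc; auto.
    + inversion Hr as [|? ? Hu]. destruct Hu.
  - intros t [Hw Hc]. split.
    + intros t' [<-|[]]. constructor. intros u [= <-]. apply Hw. left; auto.
    + apply con_unfold; [discriminate|]. left. split; [repeat constructor|exact Hc].
  - intros X t He. apply ent_unfold. cbn [ent_body].
    destruct X as [|u X]; [destruct (ent_nil _ _ He)|].
    unfold inls. rewrite flat_map_map_section; auto. split; [|exact He].
    exists (Some u). left; auto.
Qed.

Lemma inr_embedding a b : token_embedding (TSum a b) b (fun u => RInr (Some u)).
Proof.
  split.
  - intros X [Hw Hc]. split; [embedding_wt|].
    destruct X as [|u X]; [apply con_nil|].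
    apply con_unfold in Hc as [[Hl _]|[_ Hc]]; [| |discriminate].
    + inversion Hl as [|? ? Hu]. destruct Hu.
    + unfold inrs in Hc. rewrite flat_map_map_section in Hc; auto.
  - intros t [Hw Hc]. split.
    + intros t' [<-|[]]. constructor. intros u [= <-]. apply Hw. left; auto.
    + apply con_unfold; [discriminate|]. right. split; [repeat constructor|exact Hc].
  - intros X t He. apply ent_unfold. cbn [ent_body].
    destruct X as [|u X]; [destruct (ent_nil _ _ He)|].
    unfold inrs. rewrite flat_map_map_section; auto. split; [|exact He].
    exists (Some u). left; auto.
Qed.

Definition fst_elem {a b} : elem (TProd a b) -> elem a := restrict (fst_embedding a b).
Definition snd_elem {a b} : elem (TProd a b) -> elem b := restrict (snd_embedding a b).
Definition unfold_elem {s} : elem (TMu s) -> elem (unfold_ty s) := restrict (fold_embedding s).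
Definition outl_elem {a b} : elem (TSum a b) -> elem a := restrict (inl_embedding a b).
Definition outr_elem {a b} : elem (TSum a b) -> elem b := restrict (inr_embedding a b).

Lemma sum_left_tokens {a b} (x : elem (TSum a b)) u :
  carrier x (RInl None) -> carrier x u -> isInl u.
Proof.
  intros H1 H2.
  assert (Hc : con (TSum a b) [RInl None; u])
    by (apply (con_of_carrier x); intros t [<-|[<-|[]]]; auto).
  apply con_unfold in Hc as [[Hf _]|[Hf _]]; [| |discriminate].
  - inversion Hf as [|? ? _ Hf']. inversion Hf'. auto.
  - inversion Hf as [|? ? Hu]. destruct Hu.
Qed.

Lemma sum_right_tokens {a b} (x : elem (TSum a b)) u :
  carrier x (RInr None) -> carrier x u -> isInr u.
Proof.
  intros H1 H2.
  assert (Hc : con (TSum a b) [RInr None; u])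
    by (apply (con_of_carrier x); intros t [<-|[<-|[]]]; auto).
  apply con_unfold in Hc as [[Hf _]|[Hf _]]; [| |discriminate].
  - inversion Hf as [|? ? Hu]. destruct Hu.
  - inversion Hf as [|? ? _ Hf']. inversion Hf'. auto.
Qed.

(** * Application and finitely generated points *)

Lemma fun_token_Con {a b} (f : elem (TArr a b)) Y c :
  carrier f (RFun Y c) -> Con a Y /\ Con b [c].
Proof.
  intros H. destruct (Con1_of_carrier f _ H) as [Hw Hc].
  specialize (Hw _ (or_introl eq_refl)). inversion Hw as [| | | | |? ? ? ? HY Hc'|]; subst.
  apply con_unfold in Hc as [H1 H2]; [|discriminate].
  specialize (H1 _ (or_introl eq_refl)). simpl in H1.
  split; split; auto.
  - intros t [<-|[]]; auto.
  - apply (H2 [RFun Y c]); [apply incl_refl|]. simpl. rewrite app_nil_r. exact H1.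
Qed.

Lemma Con_fun_token a b Y c : Con a Y -> Con b [c] -> Con (TArr a b) [RFun Y c].
Proof.
  intros [HwY HcY] [Hwc Hcc]. split.
  - intros t [<-|[]]. constructor; auto. apply Hwc. left; auto.
  - apply con_unfold; [discriminate|]. split.
    + intros t [<-|[]]. exact HcY.
    + intros I HI _. apply (con_incl _ _ [c]); [|exact Hcc].
      intros d Hd. apply in_fress in Hd as [Y' HY']. apply HI in HY' as [[= -> ->]|[]]. left; auto.
Qed.

Lemma app_collect {a b} (f : elem (TArr a b)) (x : elem a) C :
  (forall c, In c C -> Defs.app (carrier f) (carrier x) c) ->
  exists T, (forall t, In t T -> carrier f t) /\ (forall u, In u (fargs T) -> carrier x u)
            /\ fress T = C.
Proof.
  induction C as [|c C IH]; intros H.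
  - exists []. repeat split; auto; intros u [].
  - destruct (H c (or_introl eq_refl)) as [Y [HY Hf]].
    destruct IH as [T [H1 [H2 H3]]]; [intros; apply H; right; auto|].
    exists (RFun Y c :: T). split; [|split].
    + intros t [<-|Ht]; auto.
    + intros u Hu. apply in_app_or in Hu as [Hu|Hu]; auto.
    + simpl. congruence.
Qed.

Lemma app_ideal {a b} (f : elem (TArr a b)) (x : elem a) :
  is_ideal b (Defs.app (carrier f) (carrier x)).
Proof.
  split.
  - intros C HC. destruct (app_collect f x C HC) as [T [HT [Hargs <-]]]. split.
    + intros c Hc. apply in_fress in Hc as [Y HY].
      exact (proj1 (proj2 (fun_token_Con f Y c (HT _ HY))) c (or_introl eq_refl)).
    + destruct T as [|t T]; [apply con_nil|].
      apply (con_of_carrier f) in HT. apply con_unfold in HT as [_ HT]; [|discriminate].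
      apply HT; [apply incl_refl|]. apply (con_of_carrier x), Hargs.
  - intros C c HC Hc He. destruct (app_collect f x C HC) as [T [HT [Hargs <-]]].
    exists (fargs T). split; auto.
    apply (carrier_of_Ent f T); auto.
    + apply Con_fun_token; [apply (Con_of_carrier x), Hargs|exact Hc].
    + apply ent_unfold. cbn [ent_body]. eapply ent_incl; [|exact He].
      intros d Hd. apply in_fress in Hd as [Z HZ]. apply in_fun_results.
      exists Z. split; auto. intros z Hz.
      assert (Hz' : In z (fargs T)) by (apply in_fargs; eauto).
      apply ent_in; auto. apply (wt_of_carrier x), Hargs, Hz'.
Qed.

Definition app_elem {a b} (f : elem (TArr a b)) (x : elem a) : elem b :=
  exist _ _ (app_ideal f x).

Lemma app_elem_mono {a b} (f f' : elem (TArr a b)) (x x' : elem a) :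
  dle f f' -> dle x x' -> dle (app_elem f x) (app_elem f' x').
Proof.
  intros Hf Hx c [Y [HY HfY]]. exists Y. split; [intros u Hu; apply Hx; auto|apply Hf; auto].
Qed.

Lemma fun_token_shift {a b} (g : elem (TArr a b)) L L' c :
  carrier g (RFun L c) -> Con a L' -> (forall z, In z L -> Ent a L' z) -> carrier g (RFun L' c).
Proof.
  intros Hg HL' Hz. destruct (fun_token_Con g L c Hg) as [_ Hc].
  apply (carrier_of_Ent g [RFun L c]).
  - intros u [<-|[]]; auto.
  - apply Con_fun_token; auto.
  - apply ent_unfold. cbn [ent_body]. apply ent_in; [apply (proj1 Hc); left; auto|].
    apply in_fun_results. exists L. split; [left|]; auto.
Qed.

Lemma fun_token_weaken {a b} (g : elem (TArr a b)) L L' c :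
  carrier g (RFun L c) -> incl L L' -> Con a L' -> carrier g (RFun L' c).
Proof.
  intros Hg Hi HL'. apply (fun_token_shift g L); auto.
  intros z Hz. apply ent_in; auto. apply (proj1 HL'), Hi, Hz.
Qed.

(* [x] only witnesses the consistency of [X]. *)
Lemma gen_ideal {τ} (x : elem τ) X (HX : forall t, In t X -> carrier x t) :
  is_ideal τ (fun t => forall z : elem τ, (forall u, In u X -> carrier z u) -> carrier z t).
Proof.
  split.
  - intros Y HY. apply (Con_of_carrier x). intros t Ht. apply HY; auto.
  - intros Y t HY Hc He z Hz. apply (carrier_of_Ent z Y); auto.
Qed.

Definition gen {τ} (x : elem τ) X (HX : forall t, In t X -> carrier x t) : elem τ :=
  exist _ _ (gen_ideal x X HX).

Lemma gen_least {τ} (x : elem τ) X HX (y : elem τ) :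
  (forall u, In u X -> carrier y u) -> dle (gen x X HX) y.
Proof. intros Hy t Ht. apply Ht, Hy. Qed.

Lemma gen_in {τ} (x : elem τ) X HX t : In t X -> carrier (gen x X HX) t.
Proof. intros Ht z Hz. auto. Qed.

Section ApplyGenerated.
Context {a b : ty} (g : elem (TArr a b)) (x : elem a) (X : list rtok)
  (HX : forall t, In t X -> carrier x t).

Let e := gen x X HX.

(* Inside function tokens of [g], an absorbable argument may be traded for the
   generators [X]; the absorbable points of [e] form an ideal containing [X]. *)
Let absorbable (y : rtok) : Prop :=
  forall Y c, (forall z, In z Y -> carrier e z) ->
    carrier g (RFun (y :: Y) c) -> carrier g (RFun (X ++ Y) c).

Lemma Con_gen_app Y Y' :
  (forall z, In z Y -> carrier e z) -> (forall z, In z Y' -> carrier e z) -> Con a (Y ++ Y').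
Proof.
  intros H H'. apply (Con_of_carrier e). intros z Hz. apply in_app_or in Hz as [Hz|Hz]; auto.
Qed.

Lemma absorb_list Z : (forall z, In z Z -> carrier e z /\ absorbable z) ->
  forall Y c, (forall z, In z Y -> carrier e z) ->
  carrier g (RFun (Z ++ Y) c) -> carrier g (RFun (X ++ Y) c).
Proof.
  assert (HXe : forall t, In t X -> carrier e t) by (intros; apply gen_in; auto).
  induction Z as [|z Z IH]; intros HZ Y c HY Hg.
  - apply (fun_token_weaken g Y); auto using incl_appr, incl_refl, Con_gen_app.
  - destruct (HZ z (or_introl eq_refl)) as [Hez Hz].
    assert (HZe : forall v, In v Z -> carrier e v) by (intros v Hv; apply HZ; right; auto).
    apply Hz in Hg; [|intros v Hv; apply in_app_or in Hv as [Hv|Hv]; auto].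
    assert (HXY : forall v, In v (X ++ Y) -> carrier e v)
      by (intros v Hv; apply in_app_or in Hv as [Hv|Hv]; auto).
    apply (fun_token_weaken g _ (Z ++ X ++ Y)) in Hg;
      [|intros v; rewrite !in_app_iff; tauto|apply Con_gen_app; auto].
    apply IH in Hg; [|intros v Hv; apply HZ; right; auto|exact HXY].
    apply (fun_token_weaken g (X ++ X ++ Y)); [exact Hg| |apply Con_gen_app; auto].
    intros v. rewrite !in_app_iff. tauto.
Qed.

Lemma absorbable_ideal : is_ideal a (fun y => carrier e y /\ absorbable y).
Proof.
  split.
  - intros Z HZ. apply (Con_of_carrier e). intros; apply HZ; auto.
  - intros Z y HZ Hc He.
    assert (HZe : forall v, In v Z -> carrier e v) by (intros v Hv; apply HZ; auto).
    assert (Hy : carrier e y) by (apply (carrier_of_Ent e Z); auto).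
    split; auto. intros Y c HY Hg. apply absorb_list with (Z := Z); auto.
    apply (fun_token_shift g (y :: Y)); [exact Hg|apply Con_gen_app; auto|].
    intros z [<-|Hz].
    + eapply ent_incl; [|exact He]. apply incl_appl, incl_refl.
    + apply ent_in; [apply (wt_of_carrier e), HY, Hz|]. apply in_or_app. auto.
Qed.

Lemma gen_absorbable t : carrier e t -> absorbable t.
Proof.
  intros Ht. apply (Ht (exist _ _ absorbable_ideal)). intros u Hu. split; [apply gen_in, Hu|].
  intros Y c HY Hg. apply (fun_token_weaken g (u :: Y)); auto.
  - intros v [<-|Hv]; apply in_or_app; auto.
  - apply Con_gen_app; auto. intros; apply gen_in; auto.
Qed.

Lemma app_gen c : carrier (app_elem g e) c <-> carrier g (RFun X c).
Proof.
  split; [|intros H; exists X; split; auto; intros; apply gen_in; auto].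
  intros [Y [HY Hg]]. rewrite <- (app_nil_r X).
  apply (absorb_list Y); [intros; split; auto using gen_absorbable|intros ? []|].
  rewrite app_nil_r. exact Hg.
Qed.

End ApplyGenerated.

(** * Scott-open, sequentially closed and compact sets *)

Lemma scott_open_true {τ} : scott_open (fun _ : elem τ => True).
Proof. split; [intros ? ? ? ?; auto|]. intros D s [[d Hd] _] _ _. exists d; auto. Qed.

Lemma scott_open_false {τ} : scott_open (fun _ : elem τ => False).
Proof. split; [intros ? ? ? []|intros ? ? ? ? []]. Qed.

Lemma scott_open_and {τ} (U V : elem τ -> Prop) :
  scott_open U -> scott_open V -> scott_open (fun x => U x /\ V x).
Proof.
  intros [Uup Uin] [Vup Vin]. split.
  - intros x y Hxy [Hu Hv]. split; eauto.
  - intros D s Hd Hl [Hu Hv].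
    destruct (Uin D s Hd Hl Hu) as [d1 [Hd1 Hu1]], (Vin D s Hd Hl Hv) as [d2 [Hd2 Hv2]].
    destruct (proj2 Hd d1 d2 Hd1 Hd2) as [d3 [Hd3 [H13 H23]]]. exists d3. split; eauto.
Qed.

Lemma scott_open_or {τ} (U V : elem τ -> Prop) :
  scott_open U -> scott_open V -> scott_open (fun x => U x \/ V x).
Proof.
  intros [Uup Uin] [Vup Vin]. split.
  - intros x y Hxy [Hu|Hv]; eauto.
  - intros D s Hd Hl [Hu|Hv].
    + destruct (Uin D s Hd Hl Hu) as [d [Hd' Hu']]. eauto.
    + destruct (Vin D s Hd Hl Hv) as [d [Hd' Hv']]. eauto.
Qed.

Lemma scott_open_exists {τ} {I : Type} (U : I -> elem τ -> Prop) :
  (forall i, scott_open (U i)) -> scott_open (fun x => exists i, U i x).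
Proof.
  intros H. split.
  - intros x y Hxy [i Hi]. exists i. apply (proj1 (H i) x y Hxy), Hi.
  - intros D s Hd Hl [i Hi]. destruct (proj2 (H i) D s Hd Hl Hi) as [d [Hd' Hi']]. eauto.
Qed.

Lemma scott_open_token {τ} t : scott_open (fun x : elem τ => carrier x t).
Proof.
  split; [intros x y Hxy; apply Hxy|].
  intros D s Hd Hl Hs. apply (carrier_lub D s Hd Hl) in Hs. exact Hs.
Qed.

Lemma scott_open_preimage {σ τ} (g : elem σ -> elem τ) (U : elem τ -> Prop) :
  (forall x y, dle x y -> dle (g x) (g y)) ->
  (forall D s, directed D -> is_lub D s ->
     forall t, carrier (g s) t -> exists d, D d /\ carrier (g d) t) ->
  scott_open U -> scott_open (fun x => U (g x)).
Proof.
  intros Hmono Hcont [Uup Uin]. split.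
  - intros x y Hxy H. exact (Uup _ _ (Hmono _ _ Hxy) H).
  - intros D s Hd Hl Hs.
    set (D' := fun y => exists d, D d /\ y = g d).
    assert (Hd' : directed D').
    { split.
      - destruct Hd as [[d Hd0] _]. exists (g d), d; auto.
      - intros y1 y2 [d1 [H1 ->]] [d2 [H2 ->]].
        destruct (proj2 Hd d1 d2 H1 H2) as [d3 [H3 [H13 H23]]].
        exists (g d3). split; [exists d3; auto|split; apply Hmono; auto]. }
    assert (Hl' : is_lub D' (g s)).
    { split.
      - intros y [d [Hdd ->]]. apply Hmono, (proj1 Hl), Hdd.
      - intros u Hub t Ht. destruct (Hcont D s Hd Hl t Ht) as [d [Hdd Ht']].
        apply (Hub (g d)); [exists d|]; auto. }
    destruct (Uin D' (g s) Hd' Hl' Hs) as [y [[d [Hdd ->]] Hy]]. eauto.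
Qed.

(* [x] is the directed lub of the points generated by its finite subsets. *)
Lemma scott_open_finite_basis {τ} (U : elem τ -> Prop) x : scott_open U -> U x ->
  exists X, (forall t, In t X -> carrier x t) /\
            forall y, (forall t, In t X -> carrier y t) -> U y.
Proof.
  intros [Uup Uin] Hx.
  set (D := fun d : elem τ => exists X HX, d = gen x X HX).
  assert (Hd : directed D).
  { split.
    - exists (gen x [] (fun t (H : In t []) => match H with end)). eexists; eexists; eauto.
    - intros d1 d2 [X1 [H1 ->]] [X2 [H2 ->]].
      assert (H3 : forall t, In t (X1 ++ X2) -> carrier x t)
        by (intros t Ht; apply in_app_or in Ht as [Ht|Ht]; auto).
      exists (gen x _ H3). split; [eexists; eexists; eauto|split];
        apply gen_least; intros u Hu; apply gen_in, in_or_app; auto. }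
  assert (Hl : is_lub D x).
  { split.
    - intros d [X [HX ->]]. apply gen_least, HX.
    - intros u Hub t Ht.
      assert (H1 : forall t', In t' [t] -> carrier x t') by (intros t' [<-|[]]; auto).
      apply (Hub (gen x [t] H1)); [eexists; eexists; eauto|]. apply gen_in. left; auto. }
  destruct (Uin D x Hd Hl Hx) as [d [[X [HX ->]] Hd']].
  exists X. split; auto. intros y Hy. exact (Uup _ _ (gen_least x X HX y Hy) Hd').
Qed.

Definition eventually (P : nat -> Prop) : Prop := exists N, forall n, N <= n -> P n.

Lemma eventually_Forall {A} (P : nat -> A -> Prop) l :
  (forall a, In a l -> eventually (fun n => P n a)) ->
  eventually (fun n => forall a, In a l -> P n a).
Proof.
  induction l as [|a l IH]; intros H.
  - exists 0. intros n _ a [].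
  - destruct IH as [N1 H1]; [intros; apply H; right; auto|].
    destruct (H a (or_introl eq_refl)) as [N2 H2].
    exists (Nat.max N1 N2). intros n Hn b [<-|Hb]; [apply H2|apply H1]; auto; lia.
Qed.

(* Convergence of the token sets in the Cantor space [rtok -> Prop]. *)
Definition converges {τ} (k : nat -> elem τ) (L : elem τ) : Prop :=
  forall t, (carrier L t -> eventually (fun n => carrier (k n) t)) /\
            (~ carrier L t -> eventually (fun n => ~ carrier (k n) t)).

Definition seq_closed {τ} (K : elem τ -> Prop) : Prop :=
  forall k L, (forall n, K (k n)) -> converges k L -> K L.

Lemma converges_reindex {τ} (k : nat -> elem τ) L (r : nat -> nat) :
  (forall n, n <= r n) -> converges k L -> converges (fun n => k (r n)) L.
Proof.
  intros Hr H t. destruct (H t) as [H1 H2]. split.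
  - intros Ht. destruct (H1 Ht) as [N HN]. exists N. intros n Hn. apply HN.
    specialize (Hr n). lia.
  - intros Ht. destruct (H2 Ht) as [N HN]. exists N. intros n Hn. apply HN.
    specialize (Hr n). lia.
Qed.

Lemma liminf_ideal {τ} (k : nat -> elem τ) :
  is_ideal τ (fun t => eventually (fun n => carrier (k n) t)).
Proof.
  split.
  - intros X HX. destruct (eventually_Forall _ X HX) as [N HN].
    apply (Con_of_carrier (k N)), HN. lia.
  - intros X t HX Hc He. destruct (eventually_Forall _ X HX) as [N HN].
    exists N. intros n Hn. apply (carrier_of_Ent (k n) X); auto.
Qed.

Definition liminf {τ} (k : nat -> elem τ) : elem τ := exist _ _ (liminf_ideal k).

Definition code_pair (m n : nat) : nat := Cantor.to_nat (m, n).

Lemma code_pair_inj m n m' n' : code_pair m n = code_pair m' n' -> m = m' /\ n = n'.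
Proof. unfold code_pair. intros H. apply Cantor.to_nat_inj in H. injection H. auto. Qed.

Fixpoint token_code (t : rtok) : nat :=
  match t with
  | RU => code_pair 0 0
  | RFst u => code_pair 1 (token_code u)
  | RSnd u => code_pair 2 (token_code u)
  | RInl None => code_pair 3 0
  | RInl (Some u) => code_pair 4 (token_code u)
  | RInr None => code_pair 5 0
  | RInr (Some u) => code_pair 6 (token_code u)
  | RFun Y c => code_pair 7 (code_pair (token_code c)
      ((fix code_list (l : list rtok) : nat :=
          match l with [] => 0 | y :: l => S (code_pair (token_code y) (code_list l)) end) Y))
  | RFold u => code_pair 8 (token_code u)
  end.

Lemma token_code_inj t t' : token_code t = token_code t' -> t = t'.
Proof.
  remember (S (depth t)) as n eqn:Hn. assert (Hd : depth t < n) by lia. clear Hn.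
  revert t t' Hd. induction n as [|n IH]; intros t t' Hd He; [pose proof (depth_pos t); lia|].
  destruct t as [|u|u|[u|]|[u|]|Y c|u], t' as [|u'|u'|[u'|]|[u'|]|Y' c'|u'];
    rewrite ?depth_RFun in Hd; cbn [token_code] in He;
    apply code_pair_inj in He as [Htag He]; try discriminate; auto.
  all: try (f_equal; try f_equal; apply IH; [simpl in Hd; lia|exact He]; fail).
  apply code_pair_inj in He as [Hc HY]. f_equal; [|apply IH; [lia|exact Hc]].
  assert (HYd : forall v, In v Y -> depth v < n)
    by (intros v Hv; pose proof (depth_le_depthL v Y Hv); lia).
  clear Hc Hd. revert Y' HY. induction Y as [|y Y IHY]; intros [|y' Y'] HY; try discriminate; auto.
  injection HY as HY. apply code_pair_inj in HY as [Hy HY].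
  f_equal; [apply IH; auto; apply HYd; left; auto|apply IHY; auto; intros; apply HYd; right; auto].
Qed.

Definition token_of_code (n : nat) : rtok := epsilon (inhabits RU) (fun t => token_code t = n).

Lemma token_of_code_code t : token_of_code (token_code t) = t.
Proof.
  apply token_code_inj, (epsilon_spec (inhabits RU) (fun t' => token_code t' = token_code t)).
  eauto.
Qed.

Definition finitely_covered {τ} {I : Type} (O : I -> elem τ -> Prop) (A : elem τ -> Prop)
  : Prop :=
  exists l : list I, forall x, A x -> exists i, In i l /\ O i x.

Section Bisection.
Context {τ : ty} {I : Type} (O : I -> elem τ -> Prop) (K : elem τ -> Prop).

(* König's lemma in the Cantor space of token sets: decide the tokens one by one,
   keeping at each stage a half that is not finitely covered. *)
Fixpoint bisect (n : nat) : elem τ -> Prop :=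
  match n with
  | 0 => K
  | S j =>
      if excluded_middle_informative
           (finitely_covered O (fun x => bisect j x /\ carrier x (token_of_code j)))
      then fun x => bisect j x /\ ~ carrier x (token_of_code j)
      else fun x => bisect j x /\ carrier x (token_of_code j)
  end.

Lemma bisect_not_covered n : ~ finitely_covered O K -> ~ finitely_covered O (bisect n).
Proof.
  intros HK. induction n as [|n IH]; [exact HK|]. cbn [bisect].
  destruct excluded_middle_informative as [[l1 Hl1]|Hf]; [|exact Hf].
  intros [l2 Hl2]. apply IH. exists (l1 ++ l2). intros x Hx.
  destruct (classic (carrier x (token_of_code n))) as [Hc|Hc];
    [destruct (Hl1 x) as [i [Hi Hix]]|destruct (Hl2 x) as [i [Hi Hix]]];
    auto; exists i; split; auto; apply in_or_app; auto.
Qed.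

Lemma bisect_antitone j n x : j <= n -> bisect n x -> bisect j x.
Proof.
  induction 1 as [|n Hjn IH]; auto. intros Hx. apply IH. revert Hx. cbn [bisect].
  destruct excluded_middle_informative; tauto.
Qed.

Lemma bisect_decides j :
  (forall x, bisect (S j) x -> carrier x (token_of_code j)) \/
  (forall x, bisect (S j) x -> ~ carrier x (token_of_code j)).
Proof. cbn [bisect]. destruct excluded_middle_informative; [right|left]; tauto. Qed.

Section Limit.
Variable k : nat -> elem τ.
Hypothesis k_bisect : forall n, bisect n (k n).

Lemma bisect_limit_token t :
  carrier (liminf k) t -> forall x, bisect (S (token_code t)) x -> carrier x t.
Proof.
  intros [N HN]. destruct (bisect_decides (token_code t)) as [Hin|Hout];
    rewrite token_of_code_code in *; [exact Hin|].
  exfalso. set (n := Nat.max N (S (token_code t))).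
  apply (Hout (k n)); [apply (bisect_antitone _ n); [lia|apply k_bisect]|apply HN; lia].
Qed.

Lemma bisect_converges : converges k (liminf k).
Proof.
  intros t. split; [intros H; exact H|]. intros Hnot.
  destruct (bisect_decides (token_code t)) as [Hin|Hout]; rewrite token_of_code_code in *.
  - exfalso. apply Hnot. exists (S (token_code t)). intros n Hn.
    apply Hin, (bisect_antitone _ n); auto.
  - exists (S (token_code t)). intros n Hn.
    apply Hout, (bisect_antitone _ n); auto.
Qed.

End Limit.
End Bisection.

Lemma compact_of_seq_closed {τ} (K : elem τ -> Prop) : seq_closed K -> compact K.
Proof.
  intros HK I O Hopen Hcov. apply NNPP. intro Hnc.
  assert (Hne : forall n, exists x, bisect O K n x).
  { intros n. apply NNPP. intros Hn. apply (bisect_not_covered O K n Hnc).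
    exists []. intros x Hx. exfalso. eauto. }
  destruct (choice _ Hne) as [k Hk].
  assert (HL : K (liminf k)).
  { apply (HK k); [|apply (bisect_converges O K), Hk].
    intros n. apply (bisect_antitone O K 0 n); [lia|apply Hk]. }
  destruct (Hcov _ HL) as [i Hi].
  destruct (scott_open_finite_basis (O i) _ (Hopen i) Hi) as [X [HX HXO]].
  destruct (eventually_Forall (fun n t => forall x, bisect O K n x -> carrier x t) X)
    as [M HM].
  { intros t Ht. exists (S (token_code t)). intros n Hn x Hx.
    apply (bisect_limit_token O K k Hk t (HX t Ht)), (bisect_antitone O K _ n); auto. }
  apply (bisect_not_covered O K M Hnc). exists [i]. intros x Hx.
  exists i. split; [left; auto|]. apply HXO. intros t Ht. apply (HM M); auto.
Qed.

Lemma seq_closed_true {τ} : seq_closed (fun _ : elem τ => True).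
Proof. intros k L _ _; exact I. Qed.

Lemma seq_closed_false {τ} : seq_closed (fun _ : elem τ => False).
Proof. intros k L Hk. destruct (Hk 0). Qed.

Lemma seq_closed_and {τ} (U V : elem τ -> Prop) :
  seq_closed U -> seq_closed V -> seq_closed (fun x => U x /\ V x).
Proof. intros HU HV k L Hk Hc. split; [apply (HU k)|apply (HV k)]; auto; apply Hk. Qed.

Lemma seq_closed_forall {τ} {I : Type} (U : I -> elem τ -> Prop) :
  (forall i, seq_closed (U i)) -> seq_closed (fun x => forall i, U i x).
Proof. intros H k L Hk Hc i. apply (H i k L); auto. Qed.

(* Either [U] holds infinitely often along the sequence, or [V] holds from some point on. *)
Lemma seq_closed_or {τ} (U V : elem τ -> Prop) :
  seq_closed U -> seq_closed V -> seq_closed (fun x => U x \/ V x).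
Proof.
  intros HU HV k L Hk Hc.
  destruct (classic (forall N, exists n, N <= n /\ U (k n))) as [H|H].
  - left. destruct (choice _ H) as [r Hr].
    apply (HU (fun n => k (r n))); [intros n; apply Hr|].
    apply converges_reindex; auto. intros n. apply Hr.
  - right. apply not_all_ex_not in H as [N HN].
    apply (HV (fun n => k (n + N))); [|apply converges_reindex; auto; intros; lia].
    intros n. destruct (Hk (n + N)) as [Hu|Hv]; auto.
    exfalso. apply HN. exists (n + N). split; auto; lia.
Qed.

Lemma seq_closed_token {τ} t : seq_closed (fun x : elem τ => carrier x t).
Proof.
  intros k L Hk Hc. apply NNPP. intros Hn. destruct (proj2 (Hc t) Hn) as [N HN].
  apply (HN N); auto.
Qed.

Lemma saturated_true {τ} : saturated (fun _ : elem τ => True).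
Proof. intros x y _ _. exact I. Qed.

Lemma saturated_false {τ} : saturated (fun _ : elem τ => False).
Proof. intros x y _ []. Qed.

Lemma saturated_and {τ} (U V : elem τ -> Prop) :
  saturated U -> saturated V -> saturated (fun x => U x /\ V x).
Proof. intros HU HV x y Hxy [Hx1 Hx2]. split; eauto. Qed.

Lemma saturated_or {τ} (U V : elem τ -> Prop) :
  saturated U -> saturated V -> saturated (fun x => U x \/ V x).
Proof. intros HU HV x y Hxy [Hx|Hx]; [left|right]; eauto. Qed.

Lemma saturated_forall {τ} {I : Type} (U : I -> elem τ -> Prop) :
  (forall i, saturated (U i)) -> saturated (fun x => forall i, U i x).
Proof. intros H x y Hxy Hx i. apply (H i x y Hxy), Hx. Qed.

Lemma saturated_token {τ} t : saturated (fun x : elem τ => carrier x t).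
Proof. intros x y Hxy. apply Hxy. Qed.

Section TokenPreimage.
Context {σ τ : ty} (g : elem σ -> elem τ) (h : rtok -> rtok)
        (Hg : forall x u, carrier (g x) u <-> carrier x (h u)).

Lemma token_preimage_mono x y : dle x y -> dle (g x) (g y).
Proof. intros H u Hu. apply Hg, H, Hg, Hu. Qed.

Lemma scott_open_token_preimage (U : elem τ -> Prop) :
  scott_open U -> scott_open (fun x => U (g x)).
Proof.
  apply scott_open_preimage; [apply token_preimage_mono|].
  intros D s Hd Hl t Ht. apply Hg, (carrier_lub D s Hd Hl) in Ht as [d [Hdd Ht]].
  exists d. split; auto. apply Hg, Ht.
Qed.

Lemma seq_closed_token_preimage (K : elem τ -> Prop) :
  seq_closed K -> seq_closed (fun x => K (g x)).
Proof.
  intros HK k L Hk Hc. apply (HK (fun n => g (k n))); auto.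
  intros u. destruct (Hc (h u)) as [H1 H2]. split.
  - intros Hu. apply Hg, H1 in Hu as [N HN]. exists N. intros n Hn. apply Hg; auto.
  - intros Hu. destruct H2 as [N HN]; [rewrite <- Hg; exact Hu|].
    exists N. intros n Hn. rewrite Hg. auto.
Qed.

Lemma saturated_token_preimage (K : elem τ -> Prop) :
  saturated K -> saturated (fun x => K (g x)).
Proof. intros HK x y Hxy. apply HK, token_preimage_mono, Hxy. Qed.

Lemma exists_token_preimage_iff (K : elem τ -> Prop) x :
  (exists y, (forall u, carrier y u <-> carrier x (h u)) /\ K y) <-> K (g x).
Proof.
  split.
  - intros [y [Hy HK]]. replace (g x) with y; auto.
    apply elem_ext. intros u. rewrite Hy, Hg. reflexivity.
  - intros HK. exists (g x). auto.
Qed.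

End TokenPreimage.

(** * Implication *)

Lemma scott_open_app_fun {a b} (x : elem a) (V : elem b -> Prop) :
  scott_open V -> scott_open (fun f : elem (TArr a b) => V (app_elem f x)).
Proof.
  apply scott_open_preimage.
  - intros f f' H. apply app_elem_mono; auto using dle_refl.
  - intros D s Hd Hl c [Y [HY Hs]]. apply (carrier_lub D s Hd Hl) in Hs as [d [Hdd Hd']].
    exists d. split; auto. exists Y; auto.
Qed.

Lemma scott_open_app_arg {a b} (f : elem (TArr a b)) (V : elem b -> Prop) :
  scott_open V -> scott_open (fun x => V (app_elem f x)).
Proof.
  apply scott_open_preimage.
  - intros x x' H. apply app_elem_mono; auto using dle_refl.
  - intros D s Hd Hl c [Y [HY Hf]].
    destruct (directed_bound_tokens D Y Hd) as [x [Hx HYx]].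
    + intros u Hu. apply (carrier_lub D s Hd Hl), HY, Hu.
    + exists x. split; auto. exists Y; auto.
Qed.

(* Cover the compact [K] by the opens [{x | V (d x)}], [d] in [D], and take an upper bound
   in [D] of a finite subcover. *)
Lemma scott_open_imp {a b} (K : elem a -> Prop) (V : elem b -> Prop) :
  compact K -> scott_open V ->
  scott_open (fun f : elem (TArr a b) => forall x, K x -> V (app_elem f x)).
Proof.
  intros HK HV. pose proof HV as [Vup _]. split.
  - intros f f' Hff Hf x Hx. apply (Vup (app_elem f x)); auto.
    apply app_elem_mono; auto using dle_refl.
  - intros D s Hd Hl Hs.
    set (O := fun (d : {d | D d}) x => V (app_elem (proj1_sig d) x)).
    destruct (HK _ O) as [l Hl'].
    + intros [d Hdd]. apply scott_open_app_arg, HV.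
    + intros x Hx. destruct (proj2 (scott_open_app_fun x V HV) D s Hd Hl (Hs x Hx))
        as [d [Hdd Hdx]].
      exists (exist _ d Hdd). exact Hdx.
    + destruct (directed_bound_list D (map (@proj1_sig _ _) l) Hd) as [d [Hdd Hub]].
      { intros d' Hd'. apply in_map_iff in Hd' as [[d'' H''] [<- _]]. exact H''. }
      exists d. split; auto. intros x Hx. destruct (Hl' x Hx) as [[d' Hd'] [Hin Hv]].
      apply (Vup _ _ (app_elem_mono _ _ x x (Hub d' (in_map (@proj1_sig _ _) _ _ Hin))
                                   (dle_refl x))), Hv.
Qed.

(* By [app_gen], [f (gen x X)] depends only on the tokens [RFun X c] of [f]. *)
Lemma seq_closed_imp {a b} (U : elem a -> Prop) (K : elem b -> Prop) :
  scott_open U -> seq_closed K -> saturated K ->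
  seq_closed (fun f : elem (TArr a b) => forall x, U x -> K (app_elem f x)).
Proof.
  intros HU HK HKup k L Hk Hc x Hx.
  destruct (scott_open_finite_basis U x HU Hx) as [X [HX HXU]].
  set (e := gen x X HX).
  assert (Ke : K (app_elem L e)).
  { apply (seq_closed_token_preimage (fun f => app_elem f e) (fun c => RFun X c)
             (fun f c => app_gen f x X HX c) K HK k L); auto.
    intros n. apply Hk, HXU. intros t Ht. apply gen_in, Ht. }
  apply (HKup _ _ (app_elem_mono L L e x (dle_refl L) (gen_least x X HX x HX)) Ke).
Qed.

Lemma saturated_imp {a b} (U : elem a -> Prop) (K : elem b -> Prop) :
  saturated K -> saturated (fun f : elem (TArr a b) => forall x, U x -> K (app_elem f x)).
Proof.
  intros HK f f' Hff Hf x Hx. apply (HK (app_elem f x)); auto.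
  apply app_elem_mono; auto using dle_refl.
Qed.

(** * The induction on formulas *)

Lemma pred_ext {A} (U V : A -> Prop) : (forall x, U x <-> V x) -> U = V.
Proof. intros H. extensionality x. apply propositional_extensionality, H. Qed.

Lemma inj_left_iff {a b} (x : elem (TSum a b)) (K : elem a -> Prop) :
  (exists y, K y /\ forall u, carrier x u <-> injL (carrier y) u)
  <-> carrier x (RInl None) /\ K (outl_elem x).
Proof.
  split.
  - intros [y [Ky Hy]]. split; [apply Hy; exact I|].
    replace (outl_elem x) with y; auto.
    apply elem_ext. intros u. symmetry. exact (Hy (RInl (Some u))).
  - intros [Hx HK]. exists (outl_elem x). split; auto.
    intros [|u|u|[u|]|o|Y c|u]; simpl; try tauto;
      split; try tauto; intros Hu; exact (sum_left_tokens x _ Hx Hu).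
Qed.

Lemma inj_right_iff {a b} (x : elem (TSum a b)) (K : elem b -> Prop) :
  (exists y, K y /\ forall u, carrier x u <-> injR (carrier y) u)
  <-> carrier x (RInr None) /\ K (outr_elem x).
Proof.
  split.
  - intros [y [Ky Hy]]. split; [apply Hy; exact I|].
    replace (outr_elem x) with y; auto.
    apply elem_ext. intros u. symmetry. exact (Hy (RInr (Some u))).
  - intros [Hx HK]. exists (outr_elem x). split; auto.
    intros [|u|u|o|[u|]|Y c|u]; simpl; try tauto;
      split; try tauto; intros Hu; exact (sum_right_tokens x _ Hx Hu).
Qed.

Lemma app_spec_iff {a b} (f : elem (TArr a b)) (A : elem a -> Prop) (B : elem b -> Prop) :
  (forall x, A x -> exists y : elem b,
     (forall d, carrier y d <-> Defs.app (carrier f) (carrier x) d) /\ B y)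
  <-> (forall x, A x -> B (app_elem f x)).
Proof.
  split.
  - intros H x Hx. destruct (H x Hx) as [y [Hy HB]].
    replace (app_elem f x) with y; auto. apply elem_ext, Hy.
  - intros H x Hx. exists (app_elem f x). split; [reflexivity|auto].
Qed.

(* Negative formulas get the stronger invariant "sequentially closed and saturated",
   which implies "compact and saturated" by [compact_of_seq_closed]. *)
Definition sign_class (s : sign) {τ} (A : elem τ -> Prop) : Prop :=
  match s with
  | SPlus => scott_open A
  | SMinus => seq_closed A /\ saturated A
  | SPM => scott_open A /\ seq_closed A
  end.

Lemma sign_class_true s {τ} : sign_class s (fun _ : elem τ => True).
Proof. destruct s; simpl; auto using scott_open_true, seq_closed_true, saturated_true. Qed.

Lemma sign_class_false s {τ} : sign_class s (fun _ : elem τ => False).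
Proof. destruct s; simpl; auto using scott_open_false, seq_closed_false, saturated_false. Qed.

Lemma sign_class_and s {τ} (U V : elem τ -> Prop) :
  sign_class s U -> sign_class s V -> sign_class s (fun x => U x /\ V x).
Proof.
  destruct s; simpl; intuition auto using scott_open_and, seq_closed_and, saturated_and.
Qed.

Lemma sign_class_or s {τ} (U V : elem τ -> Prop) :
  sign_class s U -> sign_class s V -> sign_class s (fun x => U x \/ V x).
Proof.
  destruct s; simpl; intuition auto using scott_open_or, seq_closed_or, saturated_or.
Qed.

Lemma sign_class_token s {τ} t : sign_class s (fun x : elem τ => carrier x t).
Proof. destruct s; simpl; auto using scott_open_token, seq_closed_token, saturated_token. Qed.

Lemma sign_class_token_preimage s {σ τ} (g : elem σ -> elem τ) (h : rtok -> rtok)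
  (Hg : forall x u, carrier (g x) u <-> carrier x (h u)) (A : elem τ -> Prop) :
  sign_class s A -> sign_class s (fun x => A (g x)).
Proof.
  destruct s; simpl; intuition eauto using scott_open_token_preimage,
    seq_closed_token_preimage, saturated_token_preimage.
Qed.

Lemma sign_class_restrict s {σ τ h} (E : token_embedding σ τ h) (A : elem τ -> Prop) :
  sign_class s A -> sign_class s (fun x => A (restrict E x)).
Proof. apply (sign_class_token_preimage s _ h). reflexivity. Qed.

Lemma sign_class_iter s {τ} (F : (elem τ -> Prop) -> elem τ -> Prop) A n :
  sign_class s A -> (forall B, sign_class s B -> sign_class s (F B)) ->
  sign_class s (Nat.iter n F A).
Proof. intros HA HF. induction n; simpl; auto. Qed.

Lemma sign_class_imp s {a b} (A : elem a -> Prop) (B : elem b -> Prop) :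
  sign_class (negs s) A -> sign_class s B ->
  sign_class s (fun f : elem (TArr a b) => forall x, A x -> B (app_elem f x)).
Proof.
  destruct s; simpl.
  - intros [HAo HAc] [HBo HBc]. split.
    + apply scott_open_imp; auto using compact_of_seq_closed.
    + apply seq_closed_imp; auto. apply HBo.
  - intros [HAc HAs] HBo. apply scott_open_imp; auto using compact_of_seq_closed.
  - intros HAo [HBc HBs]. split; [apply seq_closed_imp|apply saturated_imp]; auto.
Qed.

Definition env_in_class (s : sign) (Θ : fctx) (ρX : fixval) : Prop :=
  forall X σ, In (X, σ) Θ -> sign_class s (ρX X σ).

Lemma env_in_class_upd s Θ ρX X τ A :
  env_in_class s Θ ρX -> ~ In X (map fst Θ) -> sign_class s A ->
  env_in_class s (Θ ++ [(X, τ)]) (upd ρX X τ A).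
Proof.
  intros Hρ HX HA Y σ Hin. unfold upd. apply in_app_or in Hin as [Hin|[[= -> ->]|[]]].
  - assert (Y <> X) by (intros ->; apply HX, (in_map fst _ _ Hin)).
    rewrite (proj2 (Nat.eqb_neq Y X) H). apply Hρ, Hin.
  - rewrite Nat.eqb_refl. destruct (ty_eq_dec σ σ) as [e|]; [|contradiction].
    rewrite (UIP_dec ty_eq_dec e eq_refl). exact HA.
Qed.

Lemma sign_class_sem s Θ τ φ : wf s Θ τ φ ->
  forall ρX ρi, env_in_class s Θ ρX -> sign_class s (sem φ τ ρX ρi).
Proof.
  induction 1; intros ρX ρi Hρ; cbn [sem].
  - apply sign_class_true.
  - apply sign_class_false.
  - apply sign_class_and; auto.
  - apply sign_class_or; auto.
  - apply sign_class_token.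
  - rewrite (pred_ext _ (fun x => sem a t1 ρX ρi (fst_elem x)))
      by (intros x; apply (exists_token_preimage_iff fst_elem RFst); reflexivity).
    apply sign_class_restrict; auto.
  - rewrite (pred_ext _ (fun x => sem a t2 ρX ρi (snd_elem x)))
      by (intros x; apply (exists_token_preimage_iff snd_elem RSnd); reflexivity).
    apply sign_class_restrict; auto.
  - rewrite (pred_ext _ (fun x => carrier x (RInl None) /\ sem a t1 ρX ρi (outl_elem x)))
      by (intros x; apply inj_left_iff).
    apply sign_class_and; [apply sign_class_token|apply sign_class_restrict; auto].
  - rewrite (pred_ext _ (fun x => carrier x (RInr None) /\ sem a t2 ρX ρi (outr_elem x)))
      by (intros x; apply inj_right_iff).
    apply sign_class_and; [apply sign_class_token|apply sign_class_restrict; auto].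
  - rewrite (pred_ext _ (fun x => sem a (unfold_ty t) ρX ρi (unfold_elem x)))
      by (intros x; apply (exists_token_preimage_iff unfold_elem RFold); reflexivity).
    apply sign_class_restrict; auto.
  - apply Hρ. auto.
  - apply IHwf. intros Z σ' Hin. apply Hρ, in_or_app. auto.
  - apply sign_class_iter; [apply sign_class_false|]. intros A HA.
    apply IHwf, env_in_class_upd; auto.
  - apply sign_class_iter; [apply sign_class_true|]. intros A HA.
    apply IHwf, env_in_class_upd; auto.
  - apply scott_open_exists. intros m. apply IHwf, Hρ.
  - split; [apply seq_closed_forall|apply saturated_forall]; intros m; apply IHwf, Hρ.
  - rewrite (pred_ext _ (fun f => forall x, sem a σ ρX ρi x -> sem b τ ρX ρi (app_elem f x)))
      by (intros f; apply app_spec_iff).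
    apply sign_class_imp; [apply IHwf1|apply IHwf2]; intros ? ? [].
Qed.

Theorem proposition5p4 (τ : ty) (ρ : nat -> nat) (φ : form) :
  pure_type τ ->
  (wf SPlus nil τ φ -> scott_open (sem φ τ fixval0 ρ)) /\
  (wf SMinus nil τ φ -> compact (sem φ τ fixval0 ρ) /\ saturated (sem φ τ fixval0 ρ)) /\
  (wf SPM nil τ φ -> compact (sem φ τ fixval0 ρ) /\ scott_open (sem φ τ fixval0 ρ)).
Proof.
  intros _.
  assert (Hempty : forall s, env_in_class s [] fixval0) by (intros s X σ []).
  split; [|split]; intros Hwf; pose proof (sign_class_sem _ _ _ _ Hwf fixval0 ρ (Hempty _)) as H.
  - exact H.
  - destruct H as [Hc Hs]. auto using compact_of_seq_closed.
  - destruct H as [Ho Hc]. auto using compact_of_seq_closed.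
Qed.
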